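(* Let $p$ be a prime and $a,c$ positive integers such that $c$ is a primitive divisor of $p^a-1$. Let $b=2^t r_1^{t_1}\cdots r_s^{t_s}$, where $s\ge 1$, $r_1,\ldots,r_s$ are distinct odd primes, $t\ge 0$ and $t_1,\ldots,t_s\ge 1$, and assume $\gcd(p,b)=1$. Put $b'=r_1^{t_1}\cdots r_s^{t_s}$. Assume $\gcd\big(\tfrac{p^a-1}{c},b\big)=1$ and that for each $i=1,\ldots,s$ the multiplicative order of $p^a$ modulo $r_i^{t_i}$ equals $r_i^{h_i}$ for some $0\le h_i\le t_i-1$. If $t\in\{0,1\}$, or if $t\ge 2$ and $p^a\equiv 1\pmod 4$, then $$g\Big(\tfrac{p^{2^tab'}-1}{2^tb'c},\,p^{2^tab'}\Big)=2^t b'\,g\Big(\tfrac{p^a-1}{c},\,p^a\Big).$$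
   Context: For a prime power $q$ and a positive integer $k$, the Waring number $g(k,q)$ is the smallest $s$ (if it exists) such that every element of $\mathbb{F}_q$ is a sum of $s$ $k$-th powers of elements of $\mathbb{F}_q$. An integer $e$ is a primitive divisor of $p^a-1$ if $e\mid p^a-1$ and $e\nmid p^u-1$ for every $1\le u<a$. *)

From HB Require Import structures.
From mathcomp Require Import all_boot all_order all_algebra all_field.
Set Implicit Arguments. Unset Strict Implicit. Unset Printing Implicit Defensive.
Import GRing.Theory.

Definition waring_sum (F : finFieldType) (k s : nat) : Prop :=
  forall x : F, exists f : 'I_s -> F, x = (\sum_(i < s) f i ^+ k)%R.

(* g(k, |F|) exists and equals s: s is the least such number. *)
Definition is_waring_number (F : finFieldType) (k s : nat) : Prop :=
  waring_sum F k s /\ forall s', s' < s -> ~ waring_sum F k s'.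

Definition primitive_divisor (p a e : nat) : Prop :=
  e %| p ^ a - 1 /\ forall u, 1 <= u < a -> ~~ (e %| p ^ u - 1).

Definition is_mult_order (x n m : nat) : Prop :=
  0 < m /\ x ^ m = 1 %[mod n] /\ forall m', 0 < m' < m -> x ^ m' <> 1 %[mod n].

From HB Require Import structures.
From mathcomp Require Import all_boot all_order all_algebra all_field cyclic.
From mathcomp Require Import zify.
From Stdlib Require Import Classical.

(* Write q = p^a and N = 2^t b'. Lifting the exponent shows that N divides (q^d - 1)/(q - 1)
   exactly when N divides d; as gcd((q - 1)/c, N) = 1, this makes N the multiplicative order of q
   modulo Nc. Embed F1 into F2 and let g be a primitive Nc-th root of unity of F2. Its conjugates
   g^(q^i), i < N, are distinct, so 1, g, ..., g^(N-1) is a basis of F2 over F1. Both sets of powers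
   consist of 0 and a cyclic group of roots of unity, whence the (q^N - 1)/(Nc)-th powers of F2 are
   exactly the g^j z with j < N and z a (q - 1)/c-th power of F1. Splitting a representation along
   this decomposition, every element of F2 is a sum of n such powers iff every element of F1 is a
   sum of floor(n/N) powers of F1, so the least such n is N times the Waring number of F1. *)

Set Implicit Arguments. Unset Strict Implicit. Unset Printing Implicit Defensive.
Import GRing.Theory.

(** * Geometric sums and lifting the exponent *)

Definition geom_sum q d := \sum_(i < d) q ^ i.

Lemma geom_sumE q d : 0 < q -> (q - 1) * geom_sum q d = q ^ d - 1.
Proof.
move=> q_gt0; elim: d => [|d IHd]; first by rewrite /geom_sum big_ord0 muln0.
rewrite /geom_sum big_ord_recr /= -/(geom_sum q d) expnS.
have : 0 < q ^ d by rewrite expn_gt0 q_gt0.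
move: IHd; set x := q ^ d; set y := geom_sum q d; nia.
Qed.

Lemma dvdn_sub1_exp q k : 0 < q -> q - 1 %| q ^ k - 1.
Proof. by move=> q_gt0; rewrite -geom_sumE // dvdn_mulr. Qed.

Lemma geom_sumM q l m : 1 < q -> geom_sum q (l * m) = geom_sum q l * geom_sum (q ^ l) m.
Proof.
move=> q_gt1; have q_gt0 : 0 < q by lia.
apply/eqP; rewrite -(eqn_pmul2l (_ : 0 < q - 1)); last by lia.
by rewrite mulnA !geom_sumE ?expn_gt0 ?q_gt0 // expnM.
Qed.

Lemma geom_sum_mod l q d : q = 1 %[mod l] -> geom_sum q d = d %[mod l].
Proof.
move=> q1; elim: d => [|d IHd]; first by rewrite /geom_sum big_ord0.
by rewrite /geom_sum big_ord_recr /= -modnDm IHd -modnXm q1 modnXm exp1n modnDm addn1.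
Qed.

Lemma dvdn_geom_sum_sub1 l q d : 0 < q -> l %| q - 1 -> (l %| geom_sum q d) = (l %| d).
Proof.
move=> q_gt0 l_q1; have /eqP q1 : q == 1 %[mod l] by rewrite eqn_mod_dvd.
by rewrite /dvdn (geom_sum_mod _ q1).
Qed.

(* The term [(q - 1) * \sum_(i < l) geom_sum q i] below is divisible by [l ^ 2]: for odd [l]
   because the sum is [l (l - 1) / 2] modulo [l]. *)
Lemma sqr_prime_ndvd_geom_sum l q : prime l -> 0 < q -> l %| q - 1 -> odd l || (4 %| q - 1) ->
  ~~ (l ^ 2 %| geom_sum q l).
Proof.
move=> l_pr q_gt0 l_q1 l_odd4; have l_gt1 := prime_gt1 l_pr.
have splitS : geom_sum q l = l + (q - 1) * \sum_(i < l) geom_sum q i.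
  rewrite big_distrr /= -[l in l + _]card_ord -sum1_card -big_split /=.
  apply: eq_bigr => i _; rewrite geom_sumE //.
  have : 0 < q ^ i by rewrite expn_gt0 q_gt0.
  lia.
have sq_dvd : l ^ 2 %| (q - 1) * \sum_(i < l) geom_sum q i.
  have [l_odd | l_even] := boolP (odd l).
    rewrite expnS expn1 dvdn_mul // /dvdn -modn_summ.
    rewrite (eq_bigr (fun i : 'I_l => i %% l)) => [|i _]; last first.
      by rewrite (geom_sum_mod _ _) //; apply/eqP; rewrite eqn_mod_dvd.
    rewrite modn_summ -(big_mkord xpredT (fun i => i)) bin2_sum.
    apply: prime_dvd_bin => //; have : l != 2 by apply: contraTneq l_odd => ->.
    lia.
  have l2 : l = 2 by apply/eqP; rewrite eq_sym -dvdn_prime2 // dvdn2 l_even.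
  by move: l_odd4; rewrite l2 /= => /dvdn_mulr.
rewrite splitS dvdn_addl // expnS expn1.
apply/negP => /(dvdn_leq (ltnW l_gt1)); rewrite -[leqRHS]muln1 leq_mul2l; lia.
Qed.

Lemma dvdn_geom_sum_pexp l e q d : prime l -> 1 < q -> l %| q - 1 -> odd l || (4 %| q - 1) ->
  (l ^ e %| geom_sum q d) = (l ^ e %| d).
Proof.
move=> l_pr; have l_gt0 := prime_gt0 l_pr.
elim: e q d => [|e IHe] q d q_gt1 l_q1 l_odd4; first by rewrite !expn0 !dvd1n.
have q_gt0 : 0 < q by lia.
have l_dvd : l %| l ^ e.+1 by rewrite expnS dvdn_mulr.
have [/dvdnP[m ->] | l_nd] := boolP (l %| d); last first.
  rewrite (contraNF (dvdn_trans l_dvd) l_nd).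
  by apply/contraNF: l_nd => /(dvdn_trans l_dvd); rewrite dvdn_geom_sum_sub1.
have /dvdnP[u Sql] : l %| geom_sum q l by rewrite dvdn_geom_sum_sub1.
have le_u : coprime (l ^ e) u.
  case: e {IHe l_dvd} => [|e]; first by rewrite coprime1n.
  rewrite coprime_pexpl // prime_coprime //.
  apply: contra (sqr_prime_ndvd_geom_sum l_pr q_gt0 l_q1 l_odd4).
  by rewrite Sql expnS expn1 mulnC dvdn_pmul2l.
rewrite mulnC geom_sumM // Sql mulnAC expnSr [l * m]mulnC !dvdn_pmul2r // Gauss_dvdr //.
have ql_q1 := dvdn_sub1_exp l q_gt0.
apply: IHe; first by rewrite -(exp1n l) ltn_exp2r.
  exact: dvdn_trans ql_q1.
by case/orP: l_odd4 => [-> // | /dvdn_trans-> //]; rewrite orbT.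
Qed.

Lemma dvdn_geom_sum q N d : 1 < q -> 0 < N ->
    (forall l, prime l -> l %| N -> l %| q - 1) -> (4 %| N -> 4 %| q - 1) ->
  (N %| geom_sum q d) = (N %| d).
Proof.
move=> q_gt1; elim/ltn_ind: N => N IHN N_gt0 rad_N N4.
have [N_le1 | N_gt1] := leqP N 1.
  have -> : N = 1 by lia.
  by rewrite !dvd1n.
have l_pr := pdiv_prime N_gt1; set l := pdiv N in l_pr.
have [M l_M defN] := pfactor_coprime l_pr N_gt0; set e := logn l N in defN.
have e_gt0 : 0 < e by rewrite logn_gt0 mem_primes l_pr N_gt0 pdiv_dvd.
have le_gt1 : 1 < l ^ e by rewrite -(exp1n e) ltn_exp2r ?prime_gt1.
have M_N : M %| N by rewrite defN dvdn_mulr.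
have M_lt : M < N by rewrite defN -[ltnLHS]muln1 ltn_pmul2l // (dvdn_gt0 N_gt0 M_N).
have le_N : l ^ e %| N by rewrite defN dvdn_mull.
have l_q1 : l %| q - 1 by rewrite rad_N ?pdiv_dvd.
have M_le : coprime M (l ^ e) by rewrite coprimeXr // coprime_sym.
rewrite defN !Gauss_dvd //; congr (_ && _).
  apply: IHN => //; first exact: dvdn_gt0 M_N.
    by move=> r r_pr r_M; apply: rad_N (dvdn_trans r_M M_N).
  by move=> /dvdn_trans/(_ M_N).
have [l_odd4 | ] := boolP (odd l || (4 %| q - 1)); first exact: dvdn_geom_sum_pexp.
rewrite negb_or => /andP[l_even nq4].
have l2 : l = 2 by apply/eqP; rewrite eq_sym -dvdn_prime2 // dvdn2.
have e1 : e = 1.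
  apply/eqP; rewrite eqn_leq e_gt0 andbT leqNgt; apply: contra nq4 => e_gt1; apply: N4.
  by apply: dvdn_trans le_N; rewrite l2 -[4]/(2 ^ 2) dvdn_Pexp2l.
by rewrite e1 expn1 dvdn_geom_sum_sub1 //; lia.
Qed.

Lemma is_mult_order_mul q N c : 1 < q -> 0 < N -> c %| q - 1 -> coprime N ((q - 1) %/ c) ->
    (forall l, prime l -> l %| N -> l %| q - 1) -> (4 %| N -> 4 %| q - 1) ->
  is_mult_order q (N * c) N.
Proof.
move=> q_gt1 N_gt0 c_q1 N_k rad_N N4; have q_gt0 : 0 < q by lia.
have c_gt0 : 0 < c by apply: dvdn_gt0 c_q1; lia.
have exp_mod1 d : (q ^ d == 1 %[mod N * c]) = (N %| d).
  rewrite eqn_mod_dvd ?expn_gt0 ?q_gt0 // -geom_sumE // -(divnK c_q1) mulnAC.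
  by rewrite dvdn_pmul2r // Gauss_dvdr // dvdn_geom_sum.
split=> //; split; first by apply/eqP; rewrite exp_mod1.
move=> d /andP[d_gt0 d_lt] /eqP; rewrite exp_mod1 => /(dvdn_leq d_gt0); lia.
Qed.

(** * Sums of elements of a set *)

Lemma ex_leq_mean N (f : 'I_N -> nat) : 0 < N -> exists j, f j <= (\sum_j f j) %/ N.
Proof.
move=> N_gt0; apply/existsP; apply: contraT => /existsPn all_gt.
have : \sum_(j < N) ((\sum_j f j) %/ N).+1 <= \sum_j f j.
  by apply: leq_sum => j _; rewrite ltnNge all_gt.
rewrite sum_nat_const card_ord; set S := \sum_j f j.
by have := ltn_ceil S N_gt0; rewrite mulnC; lia.
Qed.

Lemma least_scale (P1 P2 : nat -> Prop) N : 0 < N -> (forall n, P2 n <-> P1 (n %/ N)) ->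
  forall n, (P2 n /\ forall n', n' < n -> ~ P2 n') <->
    exists2 m, n = N * m & (P1 m /\ forall m', m' < m -> ~ P1 m').
Proof.
move=> N_gt0 P21 n; split=> [[P2n least_n] | [m -> [P1m least_m]]]; last first.
  split=> [|n' lt_n' /P21]; first by apply/P21; rewrite mulKn.
  by apply: least_m; rewrite ltn_divLR // mulnC.
have N_dvd : N %| n.
  apply/negPn/negP => N_nd; apply: (least_n (N * (n %/ N))).
    by rewrite ltn_neqAle mulnC leq_divM andbT; apply: contraNneq N_nd => <-; rewrite dvdn_mull.
  by apply/P21; rewrite mulKn //; apply/P21.
exists (n %/ N); first by rewrite mulnC divnK.
split=> [|m' lt_m' P1m']; first by apply/P21.
by apply: (least_n (N * m')); [rewrite mulnC -ltn_divRL | apply/P21; rewrite mulKn].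
Qed.

Local Open Scope ring_scope.

Definition sum_of (V : nmodType) (A : pred V) (n : nat) (x : V) : Prop :=
  exists l : seq V, [/\ size l = n, all A l & x = \sum_(y <- l) y].

Lemma sum_of_leq (V : nmodType) (A : pred V) m n x :
  A 0 -> (m <= n)%N -> sum_of A m x -> sum_of A n x.
Proof.
move=> A0 le_mn [l [size_l A_l ->]]; exists (l ++ nseq (n - m) 0); split.
- by rewrite size_cat size_nseq size_l subnKC.
- by rewrite all_cat A_l; apply/allP=> y /nseqP[->].
by rewrite big_cat /= [X in _ + X]big1_seq ?addr0 // => y /andP[_ /nseqP[->]].
Qed.

Section Decomposition.
Variables (V1 V2 : nmodType) (N : nat) (psi : 'I_N -> V1 -> V2) (A1 : pred V1) (A2 : pred V2).
Hypothesis N_gt0 : (0 < N)%N.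
Hypothesis psi0 : forall j, psi j 0 = 0.
Hypothesis psiD : forall j, {morph psi j : x y / x + y}.
Hypothesis psi_onto : forall x, exists u : 'I_N -> V1, x = \sum_j psi j (u j).
Hypothesis psi_inj : forall u v : 'I_N -> V1, \sum_j psi j (u j) = \sum_j psi j (v j) -> u =1 v.
Hypothesis A1_0 : A1 0.
Hypothesis A2_psi : forall y, A2 y <-> exists j, exists2 z, A1 z & y = psi j z.

Lemma psi_sum j (l : seq V1) : psi j (\sum_(z <- l) z) = \sum_(z <- l) psi j z.
Proof. exact: (big_morph (psi j) (psiD j) (psi0 j)). Qed.

Lemma sum_of_split l : all A2 l -> exists L : 'I_N -> seq V1, [/\ (\sum_j size (L j))%N = size l,
  forall j, all A1 (L j) & \sum_(y <- l) y = \sum_j psi j (\sum_(z <- L j) z)].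
Proof.
elim: l => [_|y l IHl /= /andP[/A2_psi[j0 [z0 A1z0 ->]] /IHl[L [size_L A1_L sum_l]]]].
  exists (fun=> [::]); split=> //; first by rewrite big1.
  by rewrite big_nil big1 // => j _; rewrite big_nil psi0.
exists (fun j => if j == j0 then z0 :: L j else L j); split.
- rewrite -size_L [in RHS](bigD1 j0) //= (bigD1 j0) //= eqxx; congr (_.+1 + _)%N.
  by apply: eq_bigr => j /negbTE ->.
- by move=> j; case: eqP => _ //=; rewrite A1z0 A1_L.
rewrite big_cons sum_l [in RHS](bigD1 j0) //= eqxx big_cons psiD -addrA (bigD1 j0) //=.
by congr (_ + (_ + _)); apply: eq_bigr => j /negbTE ->.
Qed.

Lemma sum_of_decomposition n :
  (forall x : V2, sum_of A2 n x) <-> (forall x : V1, sum_of A1 (n %/ N) x).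
Proof.
have A2_0 : A2 0 by apply/A2_psi; exists (Ordinal N_gt0), 0.
split=> [sums2 x | sums1 x].
  (* All coordinates of [\sum_j psi j x] are [x], and one of them gets at most [n %/ N] summands. *)
  have [l [size_l A2_l sum_l]] := sums2 (\sum_j psi j x).
  have [L [size_L A1_L sumL]] := sum_of_split A2_l.
  have [j Lj_small] := ex_leq_mean (fun j => size (L j)) N_gt0.
  have -> : x = \sum_(z <- L j) z.
    by apply: (psi_inj (v := fun j => \sum_(z <- L j) z)); rewrite -sumL.
  rewrite size_L size_l in Lj_small.
  by apply: sum_of_leq A1_0 Lj_small _; exists (L j).
have [u ->] := psi_onto x.
have [L sumL] := fin_all_exists (fun j => sums1 (u j)).
apply: sum_of_leq A2_0 (leq_divM n N) _.
exists (flatten [seq [seq psi j z | z <- L j] | j <- index_enum 'I_N]); split.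
- rewrite size_flatten sumnE !big_map (eq_bigr (fun=> n %/ N)%N) => [|j _].
    by rewrite sum_nat_const card_ord mulnC.
  by rewrite size_map; case: (sumL j).
- apply/allP => y /flattenP[_ /mapP[j _ ->] /mapP[z z_L ->]]; apply/A2_psi; exists j, z => //.
  by case: (sumL j) => _ /allP->.
rewrite big_flatten /= big_map; apply: eq_bigr => j _.
by rewrite big_map -psi_sum; case: (sumL j) => _ _ <-.
Qed.

End Decomposition.

Definition powers (F : finFieldType) (k : nat) : pred F := [pred y | [exists x, y == x ^+ k]].

Lemma waring_sum_powers (F : finFieldType) k s :
  waring_sum F k s <-> forall x : F, sum_of (powers k) s x.
Proof.
split=> [sums x | sums x].
  have [f ->] := sums x; exists [seq f i ^+ k | i <- enum 'I_s]; split.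
  - by rewrite size_map size_enum_ord.
  - by apply/allP => _ /mapP[i _ ->]; apply/exists_eqP; exists (f i).
  - by rewrite big_map big_enum.
have [l [<- pow_l ->]] := sums x.
have /fin_all_exists[f f_root] : forall i : 'I_(size l), exists z, nth 0 l i = z ^+ k.
  by move=> i; apply/exists_eqP; apply: (all_nthP 0 pow_l).
by exists f; rewrite (big_nth 0) big_mkord; apply: eq_bigr => i _.
Qed.

(** * Finite fields *)

Lemma expf_card_pred (F : finFieldType) (x : F) : x != 0 -> x ^+ #|F|.-1 = 1.
Proof.
move=> x_neq0; apply: (mulIf x_neq0); rewrite mul1r -exprSr prednK ?expf_card //.
exact: ltnW (finNzRing_gt1 F).
Qed.

Lemma expf_card_exp (F : finFieldType) (x : F) i : x ^+ (#|F| ^ i) = x.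
Proof. by elim: i => [|i IHi]; rewrite ?expr1 // expnSr exprM IHi expf_card. Qed.

Lemma prim_root_exists (F : finFieldType) n : (n %| #|F|.-1)%N -> exists z : F, n.-primitive_root z.
Proof.
move=> n_dvd; have F_gt1 := finNzRing_gt1 F.
have : has (#|F|.-1).-primitive_root (enum (predC1 (0 : F))).
  apply: has_prim_root; rewrite ?enum_uniq -?cardE ?cardC1 //; first by rewrite -subn1 subn_gt0.
  by apply/allP => x; rewrite mem_enum => /= x_neq0; apply/unity_rootP/expf_card_pred.
by case/hasP => z _ /dvdn_prim_root/(_ n n_dvd); exists (z ^+ (#|F|.-1 %/ n)).
Qed.

Lemma mem_powersE (F : finFieldType) m (y : F) : (m %| #|F|.-1)%N ->
  (y \in powers (#|F|.-1 %/ m)) = (y == 0) || (y ^+ m == 1).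
Proof.
move=> m_dvd; have F_gt1 := finNzRing_gt1 F; set k := (#|F|.-1 %/ m)%N.
have F1_km : #|F|.-1 = (k * m)%N by rewrite divnK.
have /andP[k_gt0 m_gt0] : (0 < k)%N && (0 < m)%N by rewrite -muln_gt0 -F1_km -subn1 subn_gt0.
rewrite inE; apply/exists_eqP/orP => [[x ->] | [/eqP-> | /eqP y_m]].
- have [-> | x_neq0] := eqVneq x 0; first by left; rewrite expr0n gtn_eqF.
  by right; rewrite -exprM -F1_km expf_card_pred.
- by exists 0; rewrite expr0n gtn_eqF.
have [ga ga_prim] := prim_root_exists (dvdnn #|F|.-1).
have y_unit : y ^+ #|F|.-1 = 1 by rewrite F1_km mulnC exprM y_m expr1n.
move: y_m; have [i ->] := prim_rootP ga_prim y_unit; move: (nat_of_ord i) => e.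
rewrite -exprM => /eqP; rewrite -(prim_order_dvd ga_prim) F1_km dvdn_pmul2r // => /dvdnP[f ->].
by exists (ga ^+ f); rewrite -exprM.
Qed.

Lemma rmorph_factor (R S T : nzRingType) (f : {rmorphism R -> S}) (g : {rmorphism R -> T}) :
    (forall x, exists y, f y = x) -> (forall y, f y = 0 -> g y = 0) ->
  exists h : {rmorphism S -> T}, forall y, h (f y) = g y.
Proof.
move=> f_onto ker_fg; have f_onto' x : exists y, f y == x by have [y <-] := f_onto x; exists y.
pose h x := g (xchoose (f_onto' x)).
have hf y : h (f y) = g y.
  apply/eqP; rewrite /h -subr_eq0 -rmorphB ker_fg // rmorphB; apply/eqP.
  by rewrite subr_eq0 (xchooseP (f_onto' (f y))).
have h_zmod : zmod_morphism h.
  move=> x1 x2; have [y1 <-] := f_onto x1; have [y2 <-] := f_onto x2.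
  by rewrite -rmorphB !hf rmorphB.
have h_monoid : monoid_morphism h.
  split=> [|x1 x2]; first by rewrite -(rmorph1 f) hf rmorph1.
  by have [y1 <-] := f_onto x1; have [y2 <-] := f_onto x2; rewrite -rmorphM !hf rmorphM.
pose hR : {rmorphism S -> T} :=
  HB.pack h (GRing.isZmodMorphism.Build _ _ h h_zmod) (GRing.isMonoidMorphism.Build _ _ h h_monoid).
by exists hR.
Qed.

Lemma poly_rmorph_ker_principal (K : fieldType) (R : nzRingType)
    (ev : {rmorphism {poly K} -> R}) w :
  w != 0 -> ev w = 0 -> exists2 m : {poly K}, ev m = 0 & forall f, ev f = 0 -> (m %| f)%R.
Proof.
move=> w_neq0 ev_w.
suff [m [m_neq0 ev_m m_min]] : exists m : {poly K},
    [/\ m != 0, ev m = 0 & forall f : {poly K}, (size f < size m)%N -> ev f = 0 -> f = 0].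
  exists m => // f ev_f; apply/eqP/m_min; first by rewrite ltn_modp.
  by move: ev_f; rewrite {1}(divp_eq f m) rmorphD rmorphM ev_m mulr0 add0r.
move: w_neq0 ev_w; elim/ltn_ind: {w}(size w) {-2}w (erefl (size w)) => n IHn w size_w w_neq0 ev_w.
have [[f [lt_fw ev_f f_neq0]] | no_smaller] :=
  classic (exists f : {poly K}, [/\ (size f < size w)%N, ev f = 0 & f != 0]).
  by apply: (IHn (size f) _ f erefl f_neq0 ev_f); rewrite -size_w.
exists w; split=> // f lt_fw ev_f; apply/eqP; apply: contra_notT no_smaller => f_neq0.
by exists f.
Qed.

Lemma dvdp_genPoly_root (F : finFieldType) (P : {poly F}) :
  (1 < size P)%N -> (P %| 'X^#|F| - 'X)%R -> exists x, root P x.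
Proof.
move=> P_gt1; rewrite finField_genPoly => /dvdp_prod_XsubC[ms].
case: (mask ms (index_enum F)) => [|x xs] eqP_prod.
  by move: P_gt1; rewrite (eqp_size eqP_prod) big_nil size_poly1.
by exists x; rewrite (eqp_root eqP_prod) root_prod_XsubC mem_head.
Qed.

(* As [F1 = 'F_p[th]], evaluation at a root in [F2] of the generator of the kernel of
   evaluation at [th] factors through [F1]; [in_alg] on [pPrimeCharType] is the inclusion of
   the prime field. *)
Lemma finField_embedding (F1 F2 : finFieldType) p :
    p \in [pchar F1] -> p \in [pchar F2] -> (#|F1|.-1 %| #|F2|.-1)%N ->
  inhabited {rmorphism F1 -> F2}.
Proof.
move=> ch1 ch2 card_dvd.
pose i1 : {rmorphism 'F_p -> pPrimeCharType ch1} := in_alg _.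
pose i2 : {rmorphism 'F_p -> pPrimeCharType ch2} := in_alg _.
have [th th_prim] := prim_root_exists (dvdnn #|F1|.-1).
pose ev1 : {rmorphism {poly 'F_p} -> pPrimeCharType ch1} :=
  horner_morph (fun a => mulrC (th : pPrimeCharType ch1) (i1 a)).
have ev1_onto x : exists f, ev1 f = x.
  have [-> | x_neq0] := eqVneq x 0; first by exists 0; rewrite rmorph0.
  have [i ->] := prim_rootP th_prim (expf_card_pred x_neq0).
  by exists 'X^i; rewrite rmorphXn /= horner_morphX.
pose w : {poly 'F_p} := 'X^#|F2| - 'X.
have F2_gt1 := finNzRing_gt1 F2.
have w_neq0 : w != 0.
  by rewrite -size_poly_eq0 size_polyDl ?size_polyXn ?size_polyN ?size_polyX.
have ev1_w : ev1 w = 0.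
  apply/eqP; rewrite rmorphB rmorphXn /= horner_morphX subr_eq0 -{1}(prednK (ltnW F2_gt1)) exprS.
  by have [k ->] := dvdnP card_dvd; rewrite mulnC exprM (prim_expr_order th_prim) expr1n mulr1.
have [m ev1_m m_gen] := poly_rmorph_ker_principal w_neq0 ev1_w.
have m_gt1 : (1 < size m)%N.
  rewrite ltnNge; apply/negP => /size1_polyC m_c.
  have : ev1 m == 0 by rewrite ev1_m.
  rewrite m_c /= horner_morphC fmorph_eq0 -polyC_eq0 -m_c => /eqP m_eq0.
  by move: (m_gen _ ev1_w); rewrite m_eq0 dvd0p (negPf w_neq0).
have [eta m_eta] : exists eta : F2, root (map_poly i2 m) eta.
  apply: dvdp_genPoly_root; first by rewrite size_map_poly.
  have -> : 'X^#|F2| - 'X = map_poly i2 w by rewrite rmorphB /= map_polyXn map_polyX.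
  by rewrite dvdp_map m_gen.
pose ev2 : {rmorphism {poly 'F_p} -> pPrimeCharType ch2} :=
  horner_morph (fun a => mulrC (eta : pPrimeCharType ch2) (i2 a)).
have ev2_m : ev2 m = 0 := rootP m_eta.
have [phi _] : exists phi : {rmorphism _ -> _}, forall f, phi (ev1 f) = ev2 f.
  by apply: rmorph_factor ev1_onto _ => f /m_gen/dvdpP[g ->]; rewrite rmorphM ev2_m mulr0.
by constructor; exact: phi.
Qed.

Lemma expr_sum_pchar (R : comNzRingType) n (I : Type) (r : seq I) (F : I -> R) :
  [pchar R].-nat n -> (\sum_(i <- r) F i) ^+ n = \sum_(i <- r) F i ^+ n.
Proof.
move=> n_pchar; apply: (big_morph (fun x => x ^+ n)) => [x y|]; first exact: exprDn_pchar.
by rewrite expr0n gtn_eqF //; case/andP: n_pchar.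
Qed.

Section Coordinates.
Variables (F1 F2 : finFieldType) (phi : {rmorphism F1 -> F2}) (N : nat) (g : F2).
Hypothesis card_F2 : #|F2| = (#|F1| ^ N)%N.
Hypothesis F1_pchar : [pchar F2].-nat #|F1|.
Hypothesis conj_uniq : uniq [seq g ^+ (#|F1| ^ i) | i <- iota 0 N].

(* The conjugates [g ^+ (#|F1| ^ i)] are [N] distinct roots of a polynomial of size at most [N]. *)
Lemma coord_eq0 (u : 'I_N -> F1) : \sum_(j < N) g ^+ j * phi (u j) = 0 -> u =1 (fun=> 0).
Proof.
move=> sum_eq0; pose P := \sum_(j < N) phi (u j) *: 'X^j.
have P_coef (j : 'I_N) : P`_j = phi (u j).
  rewrite coef_sum (bigD1 j) //= coefZ coefXn eqxx mulr1 big1 ?addr0 // => i i_neq_j.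
  by rewrite coefZ coefXn val_eqE eq_sym (negbTE i_neq_j) mulr0.
have size_P : (size P <= N)%N.
  rewrite (leq_trans (size_sum _ _ _)) //; apply/bigmax_leqP => j _.
  by rewrite (leq_trans (size_scale_leq _ _)) // size_polyXn.
have P_conj i : P.[g ^+ (#|F1| ^ i)] = (\sum_(j < N) g ^+ j * phi (u j)) ^+ (#|F1| ^ i).
  rewrite horner_sum expr_sum_pchar ?pnatX ?F1_pchar //; apply: eq_bigr => j _.
  by rewrite hornerZ hornerXn exprMn -rmorphXn expf_card_exp -!exprM mulnC mulrC.
have P_eq0 : P = 0.
  apply/eqP; apply: contraTT size_P => P_neq0; rewrite -ltnNge.
  have := max_poly_roots P_neq0 _ conj_uniq; rewrite size_map size_iota; apply.
  apply/allP => _ /mapP[i _ ->]; apply/rootP.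
  by rewrite P_conj sum_eq0 expr0n gtn_eqF // expn_gt0 ltnW ?finNzRing_gt1.
by move=> j; apply/eqP; rewrite -(fmorph_eq0 phi) -P_coef P_eq0 coef0.
Qed.

Lemma coord_inj (u v : 'I_N -> F1) :
  \sum_(j < N) g ^+ j * phi (u j) = \sum_(j < N) g ^+ j * phi (v j) -> u =1 v.
Proof.
move=> eq_uv j; apply/eqP; rewrite -subr_eq0; apply/eqP.
apply: (coord_eq0 (u := fun j => u j - v j)).
rewrite (eq_bigr (fun j : 'I_N => g ^+ j * phi (u j) - g ^+ j * phi (v j))) ?sumrB ?eq_uv ?subrr //.
by move=> i _; rewrite rmorphB mulrBr.
Qed.

Lemma coord_onto x : exists u : 'I_N -> F1, x = \sum_(j < N) g ^+ j * phi (u j).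
Proof.
pose coord (u : {ffun 'I_N -> F1}) := \sum_(j < N) g ^+ j * phi (u j).
have inj_coord : injective coord by move=> u v /coord_inj eq_uv; apply/ffunP.
have card_le : (#|F2| <= #|{ffun 'I_N -> F1}|)%N by rewrite card_ffun card_ord card_F2.
by have /codomP[u ->] := inj_card_onto inj_coord card_le x; exists u.
Qed.
End Coordinates.

Lemma uniq_prim_root_conj (R : nzRingType) n q N (g : R) : (0 < q)%N ->
  n.-primitive_root g -> is_mult_order q n N -> uniq [seq g ^+ (q ^ i) | i <- iota 0 N].
Proof.
move=> q_gt0 g_prim [N_gt0 [qN_1 q_ord]].
have n_q : coprime n q.
  by rewrite -(coprime_pexpr _ _ N_gt0) -coprime_modr qN_1 coprime_modr coprimen1.
have conj_neq i j : (i < j < N)%N -> (q ^ i != q ^ j %[mod n])%N.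
  case/andP=> lt_ij lt_jN; rewrite -(subnKC (ltnW lt_ij)) expnD eq_sym.
  rewrite eqn_mod_dvd ?leq_pmulr ?expn_gt0 ?q_gt0 // -{2}(muln1 (q ^ i)%N) -mulnBr.
  rewrite Gauss_dvdr ?coprimeXr //; apply/negP => dvd_n.
  have : (0 < j - i < N)%N by rewrite subn_gt0 lt_ij /=; lia.
  by move/q_ord; apply; apply/eqP; rewrite eqn_mod_dvd ?expn_gt0 ?q_gt0.
rewrite map_inj_in_uniq ?iota_uniq // => i j.
rewrite !mem_iota !add0n => /andP[_ i_lt] /andP[_ j_lt].
move/eqP; rewrite (eq_prim_root_expr g_prim).
case: (ltngtP i j) => [lt_ij | lt_ji | //].
  by rewrite (negbTE (conj_neq i j _)) ?lt_ij.
by rewrite eq_sym (negbTE (conj_neq j i _)) ?lt_ji.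
Qed.

Section PowerDecomposition.
Variables (F1 F2 : finFieldType) (phi : {rmorphism F1 -> F2}) (N c : nat) (g : F2).
Hypothesis g_prim : (N * c).-primitive_root g.
Hypothesis c_dvd : (c %| #|F1|.-1)%N.
Hypothesis Nc_dvd : (N * c %| #|F2|.-1)%N.

Lemma powers_decomposition y :
  y \in powers (#|F2|.-1 %/ (N * c)) <->
  exists j : 'I_N, exists2 z, z \in powers (#|F1|.-1 %/ c) & y = g ^+ j * phi z.
Proof.
have /andP[N_gt0 c_gt0] : (0 < N)%N && (0 < c)%N by rewrite -muln_gt0 (prim_order_gt0 g_prim).
rewrite mem_powersE //; split=> [/orP[/eqP-> | /eqP y_unity] | [j [z]]].
- by exists (Ordinal N_gt0), 0; rewrite ?mem_powersE ?eqxx // rmorph0 mulr0.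
- have [th th_prim] := prim_root_exists c_dvd.
  have gN_prim : c.-primitive_root (g ^+ N).
    by have := dvdn_prim_root g_prim (dvdn_mull N (dvdnn c)); rewrite mulnK.
  have phi_th_prim : c.-primitive_root (phi th) by rewrite fmorph_primitive_root.
  have [i gN] := prim_rootP phi_th_prim (prim_expr_order gN_prim).
  have [e' ->] := prim_rootP g_prim y_unity; move: (nat_of_ord e') => e.
  exists (Ordinal (ltn_pmod e N_gt0)), (th ^+ (i * (e %/ N))).
    by rewrite mem_powersE // exprAC (prim_expr_order th_prim) expr1n eqxx orbT.
  by rewrite rmorphXn exprM -gN -exprM -exprD /= addnC mulnC -divn_eq.
rewrite mem_powersE // => /orP[/eqP-> | /eqP z_unity] ->; first by rewrite rmorph0 mulr0 eqxx.
rewrite exprMn -exprM mulnC exprM (prim_expr_order g_prim) expr1n mul1r.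
by rewrite -rmorphXn mulnC exprM z_unity expr1n rmorph1 eqxx orbT.
Qed.
End PowerDecomposition.

Theorem waring_sum_extension (F1 F2 : finFieldType) (p a N c : nat) :
    prime p -> #|F1| = (p ^ a)%N -> #|F2| = (p ^ (a * N))%N -> (c %| p ^ a - 1)%N ->
    is_mult_order (p ^ a) (N * c) N ->
  forall n, waring_sum F2 ((p ^ (a * N) - 1) %/ (N * c)) n <->
    waring_sum F1 ((p ^ a - 1) %/ c) (n %/ N).
Proof.
move=> p_pr card_F1 card_F2 c_dvd q_ord n.
have ch1 := card_finPcharP card_F1 p_pr; have ch2 := card_finPcharP card_F2 p_pr.
have F1_pred : (p ^ a - 1)%N = #|F1|.-1 by rewrite card_F1 subn1.
have F2_pred : (p ^ (a * N) - 1)%N = #|F2|.-1 by rewrite card_F2 subn1.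
rewrite F1_pred F2_pred; rewrite F1_pred in c_dvd; rewrite -card_F1 in q_ord.
rewrite expnM -card_F1 in card_F2.
have [N_gt0 [qN_1 _]] := q_ord; have q_gt0 : (0 < #|F1|)%N by rewrite card_F1 expn_gt0 prime_gt0.
have Nc_dvd : (N * c %| #|F2|.-1)%N by rewrite card_F2 -subn1 -eqn_mod_dvd ?qN_1 // expn_gt0 q_gt0.
have card_dvd : (#|F1|.-1 %| #|F2|.-1)%N by rewrite card_F2 -!subn1 dvdn_sub1_exp.
have F1_pchar : [pchar F2].-nat #|F1| by rewrite card_F1 pnatX (eq_pnat _ (pcharf_eq ch2)) pnat_id.
have [phi] := finField_embedding ch1 ch2 card_dvd.
have [g g_prim] := prim_root_exists Nc_dvd.
have conj_uniq := uniq_prim_root_conj q_gt0 g_prim q_ord.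
rewrite !waring_sum_powers; apply: (sum_of_decomposition (psi := fun j z => g ^+ j * phi z)) => //.
- by move=> j; rewrite rmorph0 mulr0.
- by move=> j x y; rewrite rmorphD mulrDr.
- exact: coord_onto.
- exact: coord_inj.
- by have := mem_powersE (0 : F1) c_dvd; rewrite eqxx.
by move=> y; apply: powers_decomposition.
Qed.

Local Close Scope ring_scope.

Lemma dvdn_sub1_of_mult_order q r e h : 0 < q -> prime r -> 0 < e ->
  is_mult_order q (r ^ e) (r ^ h) -> r %| q - 1.
Proof.
move=> q_gt0 r_pr e_gt0 [_ [q_rh _]].
have fermat_iter : q ^ r ^ h = q %[mod r].
  elim: h {q_rh} => [|h IHh]; first by rewrite expn1.
  by rewrite expnSr expnM -modnXm IHh modnXm fermat_little.
have r_re : r %| r ^ e by rewrite -{1}(expn1 r) dvdn_exp2l.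
by rewrite -eqn_mod_dvd // -fermat_iter -(modn_dvdm _ r_re) q_rh modn_dvdm.
Qed.

Lemma odd_coprime_pow2 p t m : 0 < t -> coprime p (2 ^ t * m) -> odd p.
Proof.
move=> t_gt0; rewrite coprimeMr coprime_pexpr // coprime_sym prime_coprime // dvdn2 negbK.
by case/andP.
Qed.

Lemma prime_dvdn_prod_pexp l s (r e : nat -> nat) : prime l -> (forall i, i < s -> prime (r i)) ->
  l %| \prod_(i < s) r i ^ e i -> exists2 i, i < s & l = r i.
Proof.
move=> l_pr r_pr; rewrite Euclid_dvd_prod // big_orE => /existsP[i].
rewrite /= Euclid_dvdX // dvdn_prime2 ?r_pr // => /andP[/eqP-> _].
by exists i.
Qed.

Theorem mainTheorem15 (p a c t s : nat) (r tt : nat -> nat)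
  (F1 F2 : finFieldType) :
  prime p -> 0 < a -> 0 < c -> primitive_divisor p a c ->
  1 <= s ->
  (forall i, i < s -> prime (r i) /\ odd (r i) /\ 1 <= tt i) ->
  (forall i j, i < s -> j < s -> r i = r j -> i = j) ->
  let b' := \prod_(i < s) r i ^ tt i in
  let b := 2 ^ t * b' in
  coprime p b ->
  coprime ((p ^ a - 1) %/ c) b ->
  (forall i, i < s -> exists2 h, h <= tt i - 1 &
       is_mult_order (p ^ a) (r i ^ tt i) (r i ^ h)) ->
  (t <= 1 \/ (2 <= t /\ p ^ a = 1 %[mod 4])) ->
  #|F1| = p ^ a ->
  #|F2| = p ^ (2 ^ t * a * b') ->
  forall n : nat,
    is_waring_number F2 ((p ^ (2 ^ t * a * b') - 1) %/ (2 ^ t * b' * c)) n <->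
    exists2 m, n = 2 ^ t * b' * m & is_waring_number F1 ((p ^ a - 1) %/ c) m.
Proof.
move=> p_pr a_gt0 _ [c_dvd _] _ r_props _ b' b p_b k_b r_ord t_cases card_F1 card_F2.
set q := p ^ a; set N := 2 ^ t * b'.
have q_gt1 : 1 < q by rewrite -(exp1n a) ltn_exp2r // prime_gt1.
have r_prime i : i < s -> prime (r i) by case/r_props.
have b'_odd : odd b'.
  apply: (big_ind odd) => // [x y|i _]; first by rewrite oddM => -> ->.
  by have [_ [r_odd _]] := r_props i (ltn_ord i); rewrite oddX r_odd orbT.
have N_gt0 : 0 < N by rewrite muln_gt0 expn_gt0 /=; case: (b') b'_odd.
have rad_N l : prime l -> l %| N -> l %| q - 1.
  move=> l_pr; rewrite Euclid_dvdM // Euclid_dvdX // dvdn_prime2 //.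
  case/orP=> [/andP[/eqP-> t_gt0] | /(prime_dvdn_prod_pexp l_pr r_prime)[i i_s ->]].
    by rewrite dvdn2 oddB ?oddX ?(odd_coprime_pow2 t_gt0 p_b) ?orbT // ltnW.
  have [h _ r_ord_i] := r_ord i i_s; have [r_pr [_ tt_gt0]] := r_props i i_s.
  exact: dvdn_sub1_of_mult_order (ltnW q_gt1) r_pr tt_gt0 r_ord_i.
have N4 : 4 %| N -> 4 %| q - 1.
  rewrite Gauss_dvdl; last by rewrite -[4]/(2 ^ 2) coprime_pexpl // prime_coprime // dvdn2 b'_odd.
  rewrite -[4]/(2 ^ 2) dvdn_Pexp2l // => t_ge2.
  by case: t_cases => [| [_ q4]]; [lia | rewrite -eqn_mod_dvd ?q4 // ltnW].
have q_ord : is_mult_order q (N * c) N by apply: is_mult_order_mul; rewrite // coprime_sym.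
have aN : 2 ^ t * a * b' = a * N by rewrite /N mulnAC mulnC.
rewrite aN in card_F2 *.
exact: least_scale N_gt0 (waring_sum_extension p_pr card_F1 card_F2 c_dvd q_ord).
Qed.
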